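(* Let $p(x,y)$ be a real polynomial with $p(0,0)=0$, $\nabla p(0,0)=(0,0)$, $\dim\operatorname{Co}N_p=2$, such that for every $A\in\mathbb{N}^2$ the main $A$-quasi-homogeneous form of $p$ is nonnegative on $\mathbb{R}^2$. Let $A=(A_1,A_2)\in\mathcal{A}_p$ and suppose $\varphi_3^A\not\equiv 0$ and condition $(\tilde C2)_A$ holds. Let $x^{\omega_1}y^{\xi_1}$ be the monomial of the main term of $\varphi_3^A$. Then for every $u_0\in\tilde U_p(A)$ the system $x\neq0$, $y\neq0$, $x^{-A_2}y^{A_1}=u_0$, $x^{\omega_1}y^{\xi_1}g_3^A(u_0)<0$ has no real solution.
   Context: $\mathbb{N}=\{1,2,\dots\}$; $\mathbb{N}_0^2$ is the set of $(A_1,A_2)\in\mathbb{N}^2$ with $\gcd(A_1,A_2)=1$. $N_p$ is the support of $p$ and $\operatorname{Co}N_p$ its convex hull. For $A\in\mathbb{N}^2$ the main $A$-quasi-homogeneous form of $p$ is the sum of the terms of $p$ whose exponent vectors $k$ minimize $\langle A,k\rangle$ over $N_p$. For $A\in\mathbb{N}_0^2$, with $B_1^A<B_2^A<\dots$ the distinct values of $\langle A,k\rangle$ on $N_p$, $\varphi_i^A$ is the sum of terms of $p$ with $\langle A,k\rangle=B_i^A$. For such a form $\sum_i c_ix^{\gamma_i}y^{\delta_i}$ ($c_i\ne0$, $\gamma_1>\gamma_2>\dots$), its main term is $c_1x^{\gamma_1}y^{\delta_1}$ and its characteristic polynomial is $\sum_ic_iu^{(\gamma_1-\gamma_i)/A_2}$;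 $g_1^A,g_2^A,g_3^A$ are those of $\varphi_1^A,\varphi_2^A,\varphi_3^A$. $\mathcal{A}_p$ is the set of $A\in\mathbb{N}_0^2$ such that $\varphi_1^A$ has at least three terms, $g_1^A\ge0$ on $\mathbb{R}$, and $g_1^A$ has a real root. $\tilde U_p(A)=\{u\in\mathbb{R}: g_1^A(u)=0,\ g_2^A(u)=0\}$. Condition $(\tilde C2)_A$: for all $(x,y)$ with $\varphi_1^A(x,y)=\varphi_2^A(x,y)=0$, $x\neq0$, $y\neq0$, one has $\varphi_3^A(x,y)>0$; and $\varphi_2^A(x,y)\ge0$ for all $(x,y)\in\mathbb{R}^2$. *)

(* A real bivariate polynomial p(x,y) is an element of
   {poly {poly R}} for R : realType: the OUTER variable is x, the inner
   coefficients are polynomials in y.  So the coefficient of x^i y^j is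
   (p`_i)`_j. *)
From HB Require Import structures.
From mathcomp Require Import all_boot all_order all_algebra.
From mathcomp Require Import reals.
Set Implicit Arguments. Unset Strict Implicit. Unset Printing Implicit Defensive.
Import Order.TTheory GRing.Theory Num.Theory.
Local Open Scope ring_scope.

Section Defs.
Variable R : realType.
Implicit Types (p phi : {poly {poly R}}) (A : nat * nat).

Definition coef2 p (i j : nat) : R := (p`_i)`_j.

Definition eval2 p (x y : R) : R := (p.[x%:P]).[y].

Definition dx p : {poly {poly R}} := p^`().
Definition dy p : {poly {poly R}} := map_poly (fun q : {poly R} => q^`()) p.

Definition supp p : seq (nat * nat) :=
  [seq (i, j) | i <- iota 0%N (size p),
                j <- [seq j <- iota 0%N (size p`_i) | coef2 p i j != 0]].

(* dim Co N_p = 2 : the support contains three affinely independent points *)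
Definition conv_dim2 p : Prop :=
  exists k1 k2 k3, [/\ k1 \in supp p, k2 \in supp p, k3 \in supp p &
    ((k2.1%:Z - k1.1%:Z) * (k3.2%:Z - k1.2%:Z)
       - (k2.2%:Z - k1.2%:Z) * (k3.1%:Z - k1.1%:Z))%R != 0].

Definition wdeg A (k : nat * nat) : nat := A.1 * k.1 + A.2 * k.2.

Definition qh_part p A (B : nat) : {poly {poly R}} :=
  \poly_(i < size p) \poly_(j < size p`_i)
     (if wdeg A (i, j) == B then coef2 p i j else 0).

Definition levels p A : seq nat :=
  sort leq (undup [seq wdeg A k | k <- supp p]).

(* phi p A i = phi_{i+1}^A (0-indexed); 0 if there is no (i+1)-th level *)
Definition phi_ p A (i : nat) : {poly {poly R}} :=
  if (i < size (levels p A))%N then qh_part p A (nth 0%N (levels p A) i) else 0.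

Definition main_form p A : {poly {poly R}} := phi_ p A 0.

Definition nterms_row phi (i : nat) : nat :=
  count (fun j => coef2 phi i j != 0) (iota 0%N (size phi`_i)).
Definition nterms phi : nat := (\sum_(i < size phi) nterms_row phi i)%N.

(* main term c_1 x^{gamma_1} y^{delta_1}: the term with largest x-exponent *)
Definition main_xexp phi : nat := (size phi).-1.
Definition main_yexp phi : nat := (size (lead_coef phi)).-1.

Definition charpoly phi A : {poly R} :=
  \sum_(i < size phi) \sum_(j < size phi`_i)
     coef2 phi i j *: 'X^((main_xexp phi - i) %/ A.2).

Definition g_ p A (i : nat) : {poly R} := charpoly (phi_ p A i) A.

Definition inN02 A : Prop := [/\ (0 < A.1)%N, (0 < A.2)%N & coprime A.1 A.2].

Definition in_calA p A : Prop :=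
  [/\ inN02 A, (3 <= nterms (phi_ p A 0))%N,
      (forall u : R, 0 <= (g_ p A 0).[u]) &
      exists u : R, (g_ p A 0).[u] = 0].

Definition tildeU p A (u : R) : Prop := (g_ p A 0).[u] = 0 /\ (g_ p A 1).[u] = 0.

Definition tildeC2 p A : Prop :=
  (forall x y : R, eval2 (phi_ p A 0) x y = 0 -> eval2 (phi_ p A 1) x y = 0 ->
     x != 0 -> y != 0 -> 0 < eval2 (phi_ p A 2) x y)
  /\ (forall x y : R, 0 <= eval2 (phi_ p A 1) x y).

End Defs.

(* Every phi_i^A is A-quasi-homogeneous: all its exponents (i, j) lie on one
   line A1 i + A2 j = B.  By coprimality of A1 and A2 such exponents differ
   from the main one (g, d) by multiples of (A2, -A1), so for x <> 0
   phi(x, y) = x^g y^d g_phi(x^-A2 y^A1).  At a solution of the system,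
   u0 being a common root of g_1 and g_2 forces phi_1^A = phi_2^A = 0 there,
   so (C2)_A makes phi_3^A positive, whereas the same factorisation says
   phi_3^A equals the negative number x^omega y^xi g_3^A(u0).  Only
   A in N_0^2, (C2)_A and u0 in U_p(A) are needed. *)
From HB Require Import structures.
From mathcomp Require Import all_boot all_order all_algebra.
From mathcomp Require Import reals zify ring.
Set Implicit Arguments. Unset Strict Implicit. Unset Printing Implicit Defensive.
Import Order.TTheory GRing.Theory Num.Theory.
Local Open Scope ring_scope.

Lemma coprime_wdeg_shift (a1 a2 i j g d : nat) :
  (0 < a2)%N -> coprime a1 a2 -> (a1 * i + a2 * j = a1 * g + a2 * d)%N ->
  (i <= g)%N -> exists k, g = (i + a2 * k)%N /\ j = (d + a1 * k)%N.
Proof.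
move=> a2_gt0 co_a E le_ig.
have Ej : (a2 * j = a1 * (g - i) + a2 * d)%N.
  have : (a1 * i <= a1 * g)%N by rewrite leq_mul2l le_ig orbT.
  by rewrite mulnBr; lia.
have /dvdnP[k Ek] : (a2 %| g - i)%N.
  rewrite -(Gauss_dvdr _ (_ : coprime a2 a1)); last by rewrite coprime_sym.
  by rewrite -(dvdn_addl _ (dvdn_mulr d (dvdnn a2))) -Ej dvdn_mulr.
exists k; split; first by lia.
by apply/eqP; rewrite -(eqn_pmul2l a2_gt0) Ej Ek; apply/eqP; lia.
Qed.

Section QuasiHomogeneous.
Variable R : realType.
Implicit Types (phi p : {poly {poly R}}) (A : nat * nat).

Definition quasi_homogeneous phi A (B : nat) : Prop :=
  forall i j, coef2 phi i j != 0 -> wdeg A (i, j) = B.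

Lemma eval2E phi x y : eval2 phi x y =
  \sum_(i < size phi) \sum_(j < size phi`_i) coef2 phi i j * (x ^+ i * y ^+ j).
Proof.
rewrite /eval2 (horner_coef phi) horner_sum; apply: eq_bigr => i _.
rewrite hornerM -rmorphXn hornerC horner_coef mulr_suml; apply: eq_bigr => j _.
by rewrite /coef2; ring.
Qed.

Lemma horner_charpoly phi A u : (charpoly phi A).[u] =
  \sum_(i < size phi) \sum_(j < size phi`_i)
     coef2 phi i j * u ^+ ((main_xexp phi - i) %/ A.2).
Proof.
rewrite /charpoly horner_sum; apply: eq_bigr => i _.
by rewrite horner_sum; apply: eq_bigr => j _; rewrite hornerZ hornerXn.
Qed.

Lemma coef2_main_term phi : phi != 0 ->
  coef2 phi (main_xexp phi) (main_yexp phi) != 0.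
Proof.
move=> phi_neq0; rewrite /coef2 /main_xexp /main_yexp -lead_coefE.
by rewrite -lead_coefE !lead_coef_eq0.
Qed.

Lemma eval2_quasi_homogeneous phi A B x y :
  (0 < A.2)%N -> coprime A.1 A.2 -> quasi_homogeneous phi A B -> x != 0 ->
  eval2 phi x y = x ^+ main_xexp phi * y ^+ main_yexp phi
                  * (charpoly phi A).[x ^- A.2 * y ^+ A.1].
Proof.
move=> A2_gt0 co_A qh_phi x_neq0.
have [->|phi_neq0] := eqVneq phi 0.
  by rewrite /eval2 /charpoly size_poly0 big_ord0 !horner0 mulr0.
rewrite eval2E horner_charpoly mulr_sumr; apply: eq_bigr => i _.
rewrite mulr_sumr; apply: eq_bigr => j _.
have [->|c_neq0] := eqVneq (coef2 phi i j) 0; first by rewrite !mul0r mulr0.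
have le_ig : (i <= main_xexp phi)%N.
  by rewrite /main_xexp; have := ltn_ord i; lia.
have same_wdeg : wdeg A (i : nat, j : nat) = wdeg A (main_xexp phi, main_yexp phi).
  by rewrite (qh_phi _ _ c_neq0) (qh_phi _ _ (coef2_main_term phi_neq0)).
have /= [k [-> ->]] := coprime_wdeg_shift A2_gt0 co_A same_wdeg le_ig.
rewrite addKn mulKn // !exprD exprMn exprVn -!exprM.
have xAk_neq0 : x ^+ (A.2 * k) != 0 by rewrite expf_neq0.
by field.
Qed.

Lemma quasi_homogeneous_phi p A n : exists B, quasi_homogeneous (phi_ p A n) A B.
Proof.
rewrite /phi_; case: ifP => _; last by exists 0%N => i j; rewrite /coef2 !coef0 eqxx.
exists (nth 0%N (levels p A) n) => i j.
rewrite /coef2 /qh_part coef_poly; case: ifP => _; last by rewrite coef0 eqxx.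
rewrite coef_poly; case: ifP => _; last by rewrite eqxx.
by case: ifP => [/eqP //|]; rewrite eqxx.
Qed.

Lemma eval2_phi_charpoly p A n x y : inN02 A -> x != 0 ->
  eval2 (phi_ p A n) x y = x ^+ main_xexp (phi_ p A n) * y ^+ main_yexp (phi_ p A n)
                           * (g_ p A n).[x ^- A.2 * y ^+ A.1].
Proof.
move=> [_ A2_gt0 co_A] x_neq0; have [B qh_phi] := quasi_homogeneous_phi p A n.
exact: eval2_quasi_homogeneous qh_phi x_neq0.
Qed.

End QuasiHomogeneous.

Theorem mainTheorem11 (R : realType) (p : {poly {poly R}}) (A : nat * nat) :
  eval2 p 0 0 = 0 ->
  eval2 (dx p) 0 0 = 0 -> eval2 (dy p) 0 0 = 0 ->
  conv_dim2 p ->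
  (forall B : nat * nat, (0 < B.1)%N -> (0 < B.2)%N ->
     forall x y : R, 0 <= eval2 (main_form p B) x y) ->
  in_calA p A ->
  phi_ p A 2 != 0 ->
  tildeC2 p A ->
  forall u0 : R, tildeU p A u0 ->
  ~ exists x y : R,
      [/\ x != 0, y != 0, x ^- A.2 * y ^+ A.1 = u0 &
          x ^+ main_xexp (phi_ p A 2) * y ^+ main_yexp (phi_ p A 2)
            * (g_ p A 2).[u0] < 0].
Proof.
move=> _ _ _ _ _ [A_N02 _ _ _] _ [C2 _] u0 [g1_u0 g2_u0] [x [y [x_neq0 y_neq0 Eu0 neg]]].
have phiE n := eval2_phi_charpoly p n y A_N02 x_neq0; rewrite Eu0 in phiE.
have phi1_0 : eval2 (phi_ p A 0) x y = 0 by rewrite phiE g1_u0 mulr0.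
have phi2_0 : eval2 (phi_ p A 1) x y = 0 by rewrite phiE g2_u0 mulr0.
by have := C2 x y phi1_0 phi2_0 x_neq0 y_neq0; rewrite phiE lt_gtF.
Qed.
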